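(* Let $n\ge 1$ and consider a (categorical) extended linear classifier with features $e_1,\ldots,e_n$, where $e_j\in\{1,\ldots,d_j\}$, real weights $w_0$ and $v_j^r$ ($1\le j\le n$, $1\le r\le d_j$), score $\nu(\mathbf e)=w_0+\sum_{j=1}^n v_j^{e_j}$ and decision $\tau(\mathbf e)=\oplus$ iff $\nu(\mathbf e)>0$. Let $\mathbf a=(a_1,\ldots,a_n)$ be an instance with $\nu(\mathbf a)>0$, and define $\delta_j$ and $\Phi$ as in the context. Let $\langle l_1,\ldots,l_n\rangle$ be an ordering of $\{1,\ldots,n\}$ such that $\delta_{l_1}\ge\delta_{l_2}\ge\cdots\ge\delta_{l_n}$. Then there exists a (unique) $k\in\{0,\ldots,n\}$ with $\sum_{r=1}^{k}\delta_{l_r}>\Phi$ and $\sum_{r=1}^{k-1}\delta_{l_r}\le\Phi$ (where for $k=0$ the second condition is vacuous), and for $\mathcal P=\{l_1,\ldots,l_k\}$: (i) for every $\mathbf e$ in the feature space, if $e_j=a_j$ for all $j\in\mathcal P$ then $\nu(\mathbf e)>0$; and (ii) $\mathcal P$ is an optimal solution of the problem: minimize $\sum_{i=1}^n p_i$ subject to $\sum_{i=1}^n\delta_i p_i>\Phi$, $p_i\in\{0,1\}$ (identifying $\mathcal P$ with $p_i=1$ iff $i\in\mathcal P$). In particular $\mathcal P$ is a PI-explanation of minimum cardinality.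
   Context: Feature space: $\mathbb E=\prod_{j=1}^n\{1,\ldots,d_j\}$. For the instance $\mathbf a$, define $v_j^{\omega}=\min_{1\le r\le d_j}v_j^r$, $\delta_j=v_j^{a_j}-v_j^{\omega}\ (\ge 0)$, $\Gamma=\nu(\mathbf a)=w_0+\sum_j v_j^{a_j}$, and $\Phi=\sum_{j=1}^n\delta_j-\Gamma$ (so $-\Phi=w_0+\sum_j v_j^{\omega}$ is the worst-case score). A PI-explanation of the prediction $\tau(\mathbf a)=\oplus$ is a subset-minimal set $\mathcal P\subseteq\{1,\ldots,n\}$ such that for all $\mathbf e\in\mathbb E$, $\bigwedge_{j\in\mathcal P}(e_j=a_j)$ implies $\tau(\mathbf e)=\oplus$. *)

(* Features are 0-based: feature j takes values in 'I_(d j)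
   (= {0,...,d_j - 1}, in bijection with the paper's {1,...,d_j}). *)
From HB Require Import structures.
From mathcomp Require Import all_boot all_order all_algebra.
Set Implicit Arguments. Unset Strict Implicit. Unset Printing Implicit Defensive.
Import Order.TTheory GRing.Theory Num.Theory.
Local Open Scope ring_scope.

Section ELC.
Variables (R : realFieldType) (n : nat) (d : 'I_n -> nat).
Variables (w0 : R) (v : forall j : 'I_n, 'I_(d j) -> R).

Definition nu (e : forall j : 'I_n, 'I_(d j)) : R := w0 + \sum_(j < n) v (e j).

Definition tau_pos (e : forall j : 'I_n, 'I_(d j)) : bool := 0 < nu e.

Variable (a : forall j : 'I_n, 'I_(d j)).

(* v_j^omega = min_r v_j^r  (the domain 'I_(d j) is nonempty since it contains a_j;
   a_j's value is used only as the seed of the iterated min) *)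
Definition vomega (j : 'I_n) : R := \big[Num.min/v (a j)]_(r : 'I_(d j)) v r.

Definition delta (j : 'I_n) : R := v (a j) - vomega j.

Definition Phi : R := \sum_(j < n) delta j - nu a.

Definition sufficient (P : {set 'I_n}) : Prop :=
  forall e : forall j : 'I_n, 'I_(d j),
    (forall j, j \in P -> e j = a j) -> tau_pos e.

Definition PI_explanation (P : {set 'I_n}) : Prop :=
  sufficient P /\ forall Q : {set 'I_n}, Q \proper P -> ~ sufficient Q.

End ELC.

From HB Require Import structures.
From mathcomp Require Import all_boot all_order all_algebra all_fingroup.
From mathcomp Require Import lra.
Import Order.TTheory GRing.Theory Num.Theory.
Set Implicit Arguments. Unset Strict Implicit. Unset Printing Implicit Defensive.
Local Open Scope ring_scope.

(* Write sum_Q := \sum_(j in Q) delta_j.  Since the features are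
   independent, the worst score over all e agreeing with a on Q is obtained by
   giving every free feature its minimal weight v_j^omega, and equals
   sum_Q - Phi.  Hence Q is a sufficient reason iff Phi < sum_Q
   (sufficient_iff).  Among all sets of a given size m the largest sum_Q is
   the sum of the m largest deltas, i.e. the prefix sum S m of the sorted
   sequence delta_(l 0) >= delta_(l 1) >= ... (sum_le_prefix_perm).  The
   prefix sums are nondecreasing and S n = \sum_j delta_j > Phi, so there is a
   first crossing index k (first_crossing), which is unique
   (crossing_unique); P = {l 0, ..., l (k-1)} then has sum_P = S k > Phi, and
   every sufficient Q satisfies S #|Q| >= sum_Q > Phi, hence #|Q| >= k = #|P|. *)

Section Scores.
Variables (R : realFieldType) (n : nat) (d : 'I_n -> nat).
Variables (w0 : R) (v : forall j : 'I_n, 'I_(d j) -> R).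
Variable (a : forall j : 'I_n, 'I_(d j)).
Arguments v : clear implicits.

Lemma vomega_le j r : vomega v a j <= v j r.
Proof. exact: bigmin_le. Qed.

Lemma delta_ge0 j : 0 <= delta v a j.
Proof. by rewrite /delta subr_ge0 vomega_le. Qed.

Lemma vomega_attained : exists m : forall j, 'I_(d j),
  forall j, vomega v a j = v j (m j).
Proof.
exists (fun j => [arg min_(r < a j) v j r]%O) => j.
case: arg_minP => // r _ r_min.
apply/eqP; rewrite eq_le vomega_le.
by apply: le_bigmin => [|i _]; exact: r_min.
Qed.

Lemma Phi_worst_case : Phi w0 v a = - (w0 + \sum_j vomega v a j).
Proof. by rewrite /Phi /nu /delta sumrB; lra. Qed.

(* The score of e rewritten against the worst case: on Q, e pays delta_j
   above the minimum, elsewhere e pays v_j^{e_j} - v_j^omega >= 0. *)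
Lemma nu_split (Q : {set 'I_n}) e :
  (forall j, j \in Q -> e j = a j) ->
  nu w0 v e = \sum_(j in Q) delta v a j - Phi w0 v a
              + \sum_(j | j \notin Q) (v j (e j) - vomega v a j).
Proof.
move=> eQ; rewrite Phi_worst_case /nu opprK.
have -> : \sum_j v j (e j) = \sum_j (vomega v a j
    + ((if j \in Q then delta v a j else 0)
       + (if j \notin Q then v j (e j) - vomega v a j else 0))).
  apply: eq_bigr => j _; case: (boolP (j \in Q)) => jQ /=.
    by rewrite eQ // /delta addr0; lra.
  by rewrite add0r; lra.
by rewrite big_split /= big_split /= -!big_mkcond /=; lra.
Qed.

Lemma nu_lower (Q : {set 'I_n}) e :
  (forall j, j \in Q -> e j = a j) ->
  \sum_(j in Q) delta v a j - Phi w0 v a <= nu w0 v e.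
Proof.
move=> eQ; rewrite (nu_split eQ) lerDl.
by apply: sumr_ge0 => j _; rewrite subr_ge0 vomega_le.
Qed.

(* The lower bound is attained: complete a on Q by minimal-weight values. *)
Lemma nu_attained (Q : {set 'I_n}) : exists e,
  (forall j, j \in Q -> e j = a j) /\
  nu w0 v e = \sum_(j in Q) delta v a j - Phi w0 v a.
Proof.
have [m m_min] := vomega_attained.
pose e j := if j \in Q then a j else m j.
have eQ : forall j, j \in Q -> e j = a j by move=> j jQ; rewrite /e jQ.
exists e; split=> //; rewrite (nu_split eQ) [X in _ + X]big1 ?addr0 //.
by move=> j /negbTE jQ; rewrite /e jQ m_min subrr.
Qed.

Lemma sufficient_iff (Q : {set 'I_n}) :
  sufficient w0 v a Q <-> Phi w0 v a < \sum_(j in Q) delta v a j.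
Proof.
split=> [suffQ | PhiQ e eQ].
  have [e [eQ nu_e]] := nu_attained Q.
  by have := suffQ e eQ; rewrite /tau_pos nu_e subr_gt0.
by rewrite /tau_pos (lt_le_trans _ (nu_lower eQ)) // subr_gt0.
Qed.

End Scores.

Section PrefixSums.
Variables (R : realFieldType) (n : nat).

Definition prefix_sum (f : 'I_n -> R) (k : nat) : R :=
  \sum_(r < n | (r < k)%N) f r.

Lemma prefix_sum_mono (f : 'I_n -> R) : (forall r, 0 <= f r) ->
  {homo prefix_sum f : k k' / (k <= k')%N >-> k <= k'}.
Proof.
move=> f_ge0 k k' kk'; rewrite /prefix_sum [X in X <= _]big_mkcond.
rewrite [X in _ <= X]big_mkcond /=; apply: ler_sum => r _.
by case: ifP => [rk | _]; [rewrite (leq_trans rk kk') | case: ifP].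
Qed.

Lemma prefix_sum_full (f : 'I_n -> R) : prefix_sum f n = \sum_r f r.
Proof. by apply: eq_bigl => r; rewrite ltn_ord. Qed.

Lemma card_prefix (m : nat) : (m <= n)%N -> #|[set r : 'I_n | (r < m)%N]| = m.
Proof.
move=> mn.
have -> : [set r : 'I_n | (r < m)%N] = [set widen_ord mn r | r in 'I_m].
  apply/setP => x; rewrite inE; apply/idP/imsetP => [xm | [y _ ->]].
    by exists (Ordinal xm) => //; apply: val_inj.
  by rewrite /= ltn_ord.
rewrite card_imset ?card_ord // => x y /(congr1 val) xy.
exact: val_inj.
Qed.

(* The elements of A outside the prefix
   have index >= #|A|, those of the prefix outside A have index < #|A|, and
   there are equally many of each. *)
Lemma sum_le_prefix (f : 'I_n -> R) :
  (forall r s : 'I_n, (r <= s)%N -> f s <= f r) ->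
  forall A : {set 'I_n}, \sum_(r in A) f r <= prefix_sum f #|A|.
Proof.
move=> f_noninc A; set m := #|A|.
have mn : (m <= n)%N by rewrite -[n]card_ord max_card.
set B := [set r : 'I_n | (r < m)%N].
have -> : prefix_sum f m = \sum_(r in B) f r.
  by apply: eq_bigl => r; rewrite inE.
have cardB : #|B| = m by rewrite card_prefix.
rewrite (big_setID B) [X in _ <= X](big_setID A) /= setIC lerD2l.
have card_diff : #|A :\: B| = #|B :\: A|.
  by rewrite !cardsD setIC cardB.
have [m0 | m_gt0] := posnP m.
  have A0 : A = set0 by apply/eqP; rewrite -cards_eq0 -/m m0.
  have B0 : B = set0 by apply/setP => r; rewrite !inE m0.
  by rewrite A0 B0 setD0 big_set0.
have pm : (m.-1 < n)%N by rewrite prednK.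
pose c := f (Ordinal pm).
apply: (@le_trans _ _ (\sum_(x in A :\: B) c)).
  apply: ler_sum => x; rewrite !inE -leqNgt => /andP [mx _].
  exact/f_noninc/(leq_trans (leq_pred m) mx).
rewrite !sumr_const card_diff -sumr_const.
apply: ler_sum => x; rewrite !inE => /andP [_ xm].
by apply: f_noninc; rewrite /= -ltnS prednK.
Qed.

Lemma sum_le_prefix_perm (f : 'I_n -> R) (l : {perm 'I_n}) :
  (forall r s : 'I_n, (r <= s)%N -> f (l s) <= f (l r)) ->
  forall Q : {set 'I_n}, \sum_(j in Q) f j <= prefix_sum (f \o l) #|Q|.
Proof.
move=> f_sorted Q; rewrite (reindex_inj (@perm_inj _ l)) /=.
have -> : \sum_(j | l j \in Q) f (l j) = \sum_(j in l @^-1: Q) f (l j).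
  by apply: eq_bigl => j; rewrite inE.
rewrite -(card_preimset Q (@perm_inj _ l)).
exact: sum_le_prefix f_sorted _.
Qed.

Lemma perm_prefix_set (f : 'I_n -> R) (l : {perm 'I_n}) (k : nat) :
  (k <= n)%N ->
  let P := [set l r | r : 'I_n & (r < k)%N] in
  \sum_(j in P) f j = prefix_sum (f \o l) k /\ #|P| = k.
Proof.
move=> kn P; split; last by rewrite card_imset ?card_prefix //; exact: perm_inj.
rewrite (reindex_inj (@perm_inj _ l)); apply: eq_bigl => r.
by rewrite mem_imset ?inE //; exact: perm_inj.
Qed.

End PrefixSums.

Section Threshold.
Variables (R : realFieldType) (S : nat -> R) (c : R).

Lemma first_crossing (m : nat) : c < S m ->
  exists k, [/\ (k <= m)%N, c < S k & forall j, (j < k)%N -> S j <= c].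
Proof.
move=> cSm; have ex : exists k, (k <= m)%N && (c < S k).
  by exists m; rewrite leqnn.
case: (ex_minnP ex) => k /andP [km cSk] k_min.
exists k; split=> // j jk; rewrite leNgt; apply/negP => cSj.
have := k_min j; rewrite cSj andbT (leq_trans (ltnW jk) km) => /(_ isT).
by rewrite leqNgt jk.
Qed.

Lemma crossing_unique (k k' : nat) :
  {homo S : i j / (i <= j)%N >-> i <= j} ->
  (forall j, (j < k)%N -> S j <= c) ->
  c < S k -> c < S k' -> ((0 < k')%N -> S k'.-1 <= c) -> k' = k.
Proof.
move=> S_mono below_k cSk cSk' below_k'.
apply/eqP; rewrite eqn_leq; apply/andP; split; last first.
  by rewrite leqNgt; apply/negP => /below_k; rewrite leNgt cSk'.
rewrite leqNgt; apply/negP => kk'.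
have k'_gt0 : (0 < k')%N by apply: leq_ltn_trans kk'.
have := S_mono k k'.-1; rewrite -ltnS prednK // => /(_ kk').
by have := below_k' k'_gt0; lra.
Qed.

End Threshold.

(* A boolean vector p encodes the set {i | p i}: the 0-1 objective and
   constraint of (ii) are the cardinality and delta-sum of that set. *)
Lemma sum_indicator (R : realFieldType) (n : nat) (f : 'I_n -> R)
    (p : 'I_n -> bool) :
  \sum_(i < n) f i * (p i)%:R = \sum_(i in [set i | p i]) f i.
Proof.
rewrite [RHS]big_mkcond /=; apply: eq_bigr => i _.
by rewrite inE; case: (p i); rewrite ?mulr1 ?mulr0.
Qed.

Lemma count_indicator (R : realFieldType) (n : nat) (p : 'I_n -> bool) :
  \sum_(i < n) ((p i) : nat)%:R = (#|[set i | p i]|)%:R :> R.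
Proof.
rewrite -sumr_const [RHS]big_mkcond /=.
by apply: eq_bigr => i _; rewrite inE; case: (p i).
Qed.

Theorem proposition1 (R : realFieldType) (n : nat) (d : 'I_n -> nat)
  (w0 : R) (v : forall j : 'I_n, 'I_(d j) -> R)
  (a : forall j : 'I_n, 'I_(d j)) (l : {perm 'I_n}) :
  (0 < n)%N ->
  0 < nu w0 v a ->
  (forall r s : 'I_n, (r <= s)%N -> delta v a (l s) <= delta v a (l r)) ->
  let cond (k : 'I_n.+1) :=
    Phi w0 v a < \sum_(r < n | (r < k)%N) delta v a (l r) /\
    ((0 < k)%N -> \sum_(r < n | (r < k.-1)%N) delta v a (l r) <= Phi w0 v a) in
  exists k : 'I_n.+1,
    cond k /\ (forall k' : 'I_n.+1, cond k' -> k' = k) /\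
    let P := [set l r | r : 'I_n & (r < k)%N] in
    (* (i) *)
    (forall e : forall j : 'I_n, 'I_(d j),
        (forall j, j \in P -> e j = a j) -> 0 < nu w0 v e) /\
    (* (ii) P is an optimal solution of the 0-1 program *)
    (Phi w0 v a < \sum_(i < n) delta v a i * (i \in P)%:R /\
     forall p : 'I_n -> bool,
       Phi w0 v a < \sum_(i < n) delta v a i * (p i)%:R ->
       \sum_(i < n) ((i \in P) : nat)%:R <= \sum_(i < n) ((p i) : nat)%:R :> R) /\
    (* in particular: a PI-explanation of minimum cardinality *)
    (PI_explanation w0 v a P /\
     forall Q : {set 'I_n}, PI_explanation w0 v a Q -> (#|P| <= #|Q|)%N).
Proof.
move=> _ nu_a_pos sorted cond.
set S := prefix_sum (delta v a \o l).
have S_mono := prefix_sum_mono (fun r => delta_ge0 v a (l r)).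
have S_full : Phi w0 v a < S n.
  have -> : S n = \sum_j delta v a j.
    by rewrite /S prefix_sum_full [RHS](reindex_inj (@perm_inj _ l)).
  by rewrite /Phi; lra.
have [k [kn PhiSk below_k]] := first_crossing S_full.
have k_le : forall Q : {set 'I_n},
    Phi w0 v a < \sum_(j in Q) delta v a j -> (k <= #|Q|)%N.
  move=> Q PhiQ; rewrite leqNgt; apply/negP => /below_k SQ.
  by have := sum_le_prefix_perm sorted Q; rewrite -/S; lra.
have kn1 : (k < n.+1)%N := kn.
exists (Ordinal kn1).
have cond_k : cond (Ordinal kn1).
  by split=> [|k_gt0]; [exact: PhiSk | apply: below_k; rewrite prednK].
split=> //; split=> [k' [PhiSk' below_k'] | P].
  by apply: val_inj; exact: crossing_unique S_mono below_k PhiSk PhiSk' below_k'.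
have [sumP cardP] := perm_prefix_set (delta v a) l kn.
have setP_P : [set i | i \in P] = P by apply/setP => i; rewrite inE.
have suffP : sufficient w0 v a P by apply/sufficient_iff; rewrite sumP.
split; [exact: suffP | split; [split | split]].
- by rewrite sum_indicator setP_P sumP.
- move=> p; rewrite sum_indicator !count_indicator setP_P ler_nat cardP.
  exact: k_le.
- split=> // Q QP /sufficient_iff /k_le kQ.
  by have := proper_card QP; rewrite cardP ltnNge kQ.
- by move=> Q [/sufficient_iff /k_le]; rewrite cardP.
Qed.
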